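(* Let $x_{00},x_{10},x_{11},x_{01}\in\mathbb{RP}^3$ be a planar quadrilateral with Laplace points $y^1$ (intersection of lines $x_{00}x_{10}$ and $x_{01}x_{11}$) and $y^2$ (intersection of lines $x_{00}x_{01}$ and $x_{10}x_{11}$), and let $N\ge2$ be an integer. Let $p_0,p_1,q_0,q_1:\{0,\dots,N\}\to\mathbb{RP}^3$ be polylines with $p_j(iN)=q_i(jN)=x_{ij}$ for $i,j\in\{0,1\}$, such that $p_0(k),p_1(k),y^2$ are collinear for all $k$ and $q_0(\ell),q_1(\ell),y^1$ are collinear for all $\ell$. Then there exists a unique multi-Q-net $f:\{0,\dots,N\}^2\to\mathbb{RP}^3$ with $f(k,jN)=p_j(k)$ for all $k\in\{0,\dots,N\}$, $j\in\{0,1\}$, and $f(iN,\ell)=q_i(\ell)$ for all $\ell\in\{0,\dots,N\}$, $i\in\{0,1\}$.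
   Context: A multi-Q-net on $\{0,\dots,N\}^2$ is a map $f$ to $\mathbb{RP}^3$ such that for all $i_0\ne i_1$, $j_0\ne j_1$ the points $f(i_0,j_0),f(i_0,j_1),f(i_1,j_1),f(i_1,j_0)$ are coplanar. Data are assumed in general position. *)

(* Points of RP^3 over a real field R are represented by
   nonzero row vectors in R^4 (homogeneous coordinates); two vectors
   represent the same projective point iff they span the same line. *)
From HB Require Import structures.
From mathcomp Require Import all_boot all_order all_algebra.
Set Implicit Arguments.
Unset Strict Implicit.
Unset Printing Implicit Defensive.
Import Order.TTheory GRing.Theory Num.Theory.
Local Open Scope ring_scope.

Section Proj.
Variable R : realFieldType.
Notation vec := 'rV[R]_4.

Definition is_pt (v : vec) : Prop := v != 0.

Definition peq (u v : vec) : Prop := (u == v)%MS.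

Definition collinear (a b c : vec) : Prop :=
  (\rank (col_mx a (col_mx b c)) <= 2)%N.

Definition coplanar (a b c d : vec) : Prop :=
  (\rank (col_mx a (col_mx b (col_mx c d))) <= 3)%N.

Definition span3 (a b c : vec) : 'M[R]_(3, 4) := col_mx a (col_mx b c).

Definition planes_meet_in_point (a1 b1 c1 a2 b2 c2 a3 b3 c3 : vec) : Prop :=
  [/\ \rank (span3 a1 b1 c1) = 3%N, \rank (span3 a2 b2 c2) = 3%N,
      \rank (span3 a3 b3 c3) = 3%N &
      \rank (span3 a1 b1 c1 :&: span3 a2 b2 c2 :&: span3 a3 b3 c3)%MS = 1%N].

Definition multi_Q_net (N : nat) (f : 'I_N.+1 -> 'I_N.+1 -> vec) : Prop :=
  (forall i j, is_pt (f i j)) /\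
  (forall i0 i1 j0 j1 : 'I_N.+1, i0 != i1 -> j0 != j1 ->
     coplanar (f i0 j0) (f i0 j1) (f i1 j1) (f i1 j0)).

Definition has_boundary (N : nat) (f : 'I_N.+1 -> 'I_N.+1 -> vec)
    (p0 p1 q0 q1 : 'I_N.+1 -> vec) : Prop :=
  forall k : 'I_N.+1,
    [/\ peq (f k ord0) (p0 k), peq (f k ord_max) (p1 k),
        peq (f ord0 k) (q0 k) & peq (f ord_max k) (q1 k)].

(* The standing "general position" assumption made explicit:
   - the quadrilateral is nondegenerate (no three vertices collinear);
   - for interior k, the points p0 k, p1 k, y2 are pairwise distinct,
     and likewise q0 k, q1 k, y1;
   - for interior k, l the planes <x00,p0 k,q0 l>, <x10,p0 k,q1 l>,
     <x01,p1 k,q0 l> are planes meeting in a single point. *)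
Definition general_position (N : nat) (x00 x10 x11 x01 y1 y2 : vec)
    (p0 p1 q0 q1 : 'I_N.+1 -> vec) : Prop :=
  [/\ [/\ ~ collinear x00 x10 x11, ~ collinear x10 x11 x01,
          ~ collinear x11 x01 x00 & ~ collinear x01 x00 x10],
      (forall k : 'I_N.+1, (0 < k)%N -> (k < N)%N ->
         [/\ ~ peq (p0 k) y2, ~ peq (p1 k) y2 & ~ peq (p0 k) (p1 k)] /\
         [/\ ~ peq (q0 k) y1, ~ peq (q1 k) y1 & ~ peq (q0 k) (q1 k)]) &
      (forall k l : 'I_N.+1, (0 < k)%N -> (k < N)%N -> (0 < l)%N -> (l < N)%N ->
         planes_meet_in_point x00 (p0 k) (q0 l) x10 (p0 k) (q1 l)
                              x01 (p1 k) (q0 l))].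

End Proj.

From HB Require Import structures.
From mathcomp Require Import all_boot all_order all_algebra.
From mathcomp Require Import zify.
Set Implicit Arguments. Unset Strict Implicit. Unset Printing Implicit Defensive.
Import Order.TTheory GRing.Theory Num.Theory.
Local Open Scope ring_scope.

(* Rescale homogeneous coordinates so that the quadrilateral becomes a
   parallelogram: writing x11 = a x00 + b x10 + c x01, the vectors A0 = - a x00
   and AN = b x10 represent x00 and x10, and with Y2 = c x01 + a x00 the vectors
   A0 + Y2 and AN + Y2 represent x01 and x11; then Y2 represents the Laplace
   point y2 and AN - A0 represents y1.  Collinearity of p0 k, p1 k and y2 lets
   us pick a representative a k of p0 k such that a k + Y2 represents p1 k;
   likewise c l represents q0 l and c l + (AN - A0) represents q1 l.  The net
   f k l = a k + c l - A0 satisfies f i1 j0 = f i0 j0 - f i0 j1 + f i1 j1, so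
   all its quadrilaterals are planar.  Conversely, an interior vertex of any
   multi-Q-net with this boundary lies on the planes <x00, p0 k, q0 l>,
   <x10, p0 k, q1 l> and <x01, p1 k, q0 l>, which by general position meet in
   a single point. *)

Lemma oppmx_sub (F : fieldType) m1 m2 n (A : 'M[F]_(m1, n)) (B : 'M[F]_(m2, n)) :
  (A <= B)%MS -> (- A <= B)%MS.
Proof. by rewrite eqmx_opp. Qed.

Ltac sub_adds_atom := first [ exact: submx_refl | exact: sub0mx
  | (apply: addmx_sub; sub_adds_atom) | (apply: scalemx_sub; sub_adds_atom)
  | (apply: oppmx_sub; sub_adds_atom)
  | (apply: (submx_trans _ (addsmxSl _ _)); sub_adds_atom)
  | (apply: (submx_trans _ (addsmxSr _ _)); sub_adds_atom) ].
Ltac sub_adds := rewrite ?addsmx_sub; repeat (apply/andP; split); sub_adds_atom.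

Lemma ord_cases N (k : 'I_N.+1) : [\/ k = ord0, k = ord_max | (0 < k < N)%N].
Proof.
case: k => m hm; case: (posnP m) => [m0|m_gt0]; first by apply: Or31; apply: val_inj.
case: (eqVneq m N) => [mN|mN]; first by apply: Or32; apply: val_inj.
by apply: Or33 => /=; lia.
Qed.

Section Projective.
Variable R : realFieldType.
Notation vec := 'rV[R]_4.
Implicit Types a b c d u v w x y z : vec.

Lemma col_mx3E a b c : (col_mx a (col_mx b c) :=: a + b + c)%MS.
Proof.
rewrite -addsmxA; apply: eqmx_trans (eqmx_sym (addsmxE _ _)) _.
exact: adds_eqmx (eqmx_refl _) (eqmx_sym (addsmxE _ _)).
Qed.

Lemma span3E a b c : (span3 a b c :=: a + b + c)%MS.
Proof. exact: col_mx3E. Qed.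

Lemma collinearE a b c : collinear a b c <-> (\rank (a + b + c)%MS <= 2)%N.
Proof. by rewrite /collinear col_mx3E. Qed.

Lemma coplanarE a b c d : coplanar a b c d <-> (\rank (a + b + c + d)%MS <= 3)%N.
Proof.
rewrite /coplanar -!addsmxA.
have -> // : (col_mx a (col_mx b (col_mx c d)) :=: a + (b + (c + d)))%MS.
apply: eqmx_trans (eqmx_sym (addsmxE _ _)) _; apply: adds_eqmx (eqmx_refl _) _.
by rewrite addsmxA; exact: col_mx3E.
Qed.

Lemma peq_refl u : peq u u.
Proof. exact/eqmxP/eqmx_refl. Qed.

Lemma peq_sym u v : peq u v -> peq v u.
Proof. by move/eqmxP=> E; apply/eqmxP/eqmx_sym. Qed.

Lemma peq_trans u v w : peq u v -> peq v w -> peq u w.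
Proof. by move=> /eqmxP E1 /eqmxP E2; apply/eqmxP; apply: eqmx_trans E1 E2. Qed.

Lemma peq_neq0 u v : peq u v -> v != 0 -> u != 0.
Proof. by move=> /eqmx_rank E; rewrite -!mxrank_eq0 E. Qed.

Lemma peq_scale (s : R) u : s != 0 -> peq (s *: u) u.
Proof. by move=> s_neq0; apply/eqmxP/eqmx_scale. Qed.

Lemma rank_rV_le1 u : (\rank u <= 1)%N.
Proof. by rewrite rank_rV leq_b1. Qed.

Lemma rank_adds2 u v : (\rank (u + v)%MS <= 2)%N.
Proof.
apply: leq_trans (mxrank_adds_leqif u v) _.
by rewrite -[2%N]/(1 + 1)%N leq_add ?rank_rV_le1.
Qed.

Lemma rank_adds3 u v w : (\rank (u + v + w)%MS <= 3)%N.
Proof.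
apply: leq_trans (mxrank_adds_leqif (u + v)%MS w) _.
by rewrite -[3%N]/(2 + 1)%N leq_add ?rank_adds2 ?rank_rV_le1.
Qed.

Lemma rank1_peq (V : 'M[R]_4) u v : \rank V = 1%N ->
  (u <= V)%MS -> (v <= V)%MS -> u != 0 -> v != 0 -> peq u v.
Proof.
move=> rV uV vV u_neq0 v_neq0.
have eqV w : (w <= V)%MS -> w != 0 -> (w == V)%MS.
  by move=> wV w_neq0; rewrite -(mxrank_leqif_eq wV).2 rV rank_rV w_neq0.
move/eqmxP: (eqV u uV u_neq0) => Eu; move/eqmxP: (eqV v vV v_neq0) => Ev.
exact/eqmxP/(eqmx_trans Eu (eqmx_sym Ev)).
Qed.

Lemma rank_adds_npeq u v : u != 0 -> v != 0 -> ~ peq u v -> \rank (u + v)%MS = 2%N.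
Proof.
move=> u_neq0 v_neq0 nuv; apply/eqP; rewrite eqn_leq rank_adds2 ltnNge /=.
apply/negP => le1; apply: nuv.
have ge1 : (1 <= \rank (u + v)%MS)%N.
  by apply: leq_trans _ (mxrankS (addsmxSl u v)); rewrite rank_rV u_neq0.
have r1 : \rank (u + v)%MS = 1%N by apply/eqP; rewrite eqn_leq le1 ge1.
exact: rank1_peq r1 (addsmxSl u v) (addsmxSr u v) u_neq0 v_neq0.
Qed.

Lemma sub_adds2P w u v : (w <= u + v)%MS -> exists s t, w = s *: u + t *: v.
Proof.
case/sub_addsmxP=> [[e1 e2]] /= ->; exists (e1 0 0), (e2 0 0).
by rewrite {1}[e1]mx11_scalar {1}[e2]mx11_scalar !mul_scalar_mx.
Qed.

Lemma sub_adds3P w u v z : (w <= u + v + z)%MS ->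
  exists r s t, w = r *: u + s *: v + t *: z.
Proof.
case/sub_addsmxP=> [[e1 e2]] /= ->.
have [r [s ->]] := sub_adds2P (submxMl e1 (u + v)%MS).
by exists r, s, (e2 0 0); rewrite {1}[e2]mx11_scalar mul_scalar_mx.
Qed.

Lemma rank_geq_submx (A B : 'M[R]_4) :
  (A <= B)%MS -> (\rank B <= \rank A)%N -> (B <= A)%MS.
Proof.
by move=> sAB le_rk; rewrite -(mxrank_leqif_sup sAB).2 eqn_leq le_rk mxrankS.
Qed.

Lemma collinear_sub_adds u v w :
  \rank (u + v)%MS = 2%N -> collinear u v w -> (w <= u + v)%MS.
Proof.
move=> r2 /collinearE r3; apply: submx_trans (addsmxSr (u + v)%MS w) _.
by apply: rank_geq_submx; [exact: addsmxSl | rewrite r2].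
Qed.

Lemma collinear_in_line u v a b c : (a <= u + v)%MS -> (b <= u + v)%MS ->
  (c <= u + v)%MS -> collinear a b c.
Proof.
move=> au bv cv; apply/collinearE; apply: leq_trans (mxrankS _) (rank_adds2 u v).
by rewrite !addsmx_sub au bv cv.
Qed.

Lemma noncollinear_rank u v w : ~ collinear u v w -> \rank (u + v + w)%MS = 3%N.
Proof.
move=> nc; apply/eqP; rewrite eqn_leq rank_adds3 ltnNge /=.
by apply/negP => /collinearE.
Qed.

Lemma noncollinear_rank_adds u v w : ~ collinear u v w -> \rank (u + v)%MS = 2%N.
Proof.
move/noncollinear_rank => r3; apply/eqP; rewrite eqn_leq rank_adds2 /=.
have := mxrank_adds_leqif (u + v)%MS w; rewrite r3 => /leqifP.
by have := rank_rV_le1 w; case: ifP => _; lia.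
Qed.

Lemma adds3_peq a b c a' b' c' : peq a a' -> peq b b' -> peq c c' ->
  (a + b + c :=: a' + b' + c')%MS.
Proof.
by move=> /eqmxP Ea /eqmxP Eb /eqmxP Ec; exact: adds_eqmx (adds_eqmx Ea Eb) Ec.
Qed.

Lemma collinear_peqr a b c c' : peq c c' -> collinear a b c -> collinear a b c'.
Proof.
move=> Ec /collinearE r; apply/collinearE.
by rewrite -(adds3_peq (peq_refl a) (peq_refl b) Ec).
Qed.

Lemma lincomb2_neq0 u v (s t : R) :
  \rank (u + v)%MS = 2%N -> s != 0 -> s *: u + t *: v != 0.
Proof.
move=> r2 s_neq0; apply/negP => /eqP /(canRL (addrK _)); rewrite add0r => E.
have uv : (u <= v)%MS.
  by rewrite -[u](scalerK s_neq0) E; apply: scalemx_sub; sub_adds.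
by have := rank_rV_le1 v; rewrite -(addsmx_idPr uv) r2.
Qed.

Lemma collinear_rep_add u w Y : Y != 0 -> u != 0 -> w != 0 ->
  ~ peq u Y -> ~ peq w Y -> ~ peq u w -> collinear u w Y ->
  exists z, peq z u /\ peq (z + Y) w.
Proof.
move=> Y_neq0 u_neq0 w_neq0 nuY nwY nuw cuwY.
have r2 := rank_adds_npeq u_neq0 Y_neq0 nuY.
have /sub_adds2P [s [t ew]] : (w <= u + Y)%MS.
  apply: collinear_sub_adds r2 _; move/collinearE: cuwY => r; apply/collinearE.
  by rewrite -addsmxA [(Y + w)%MS]addsmxC addsmxA.
have t_neq0 : t != 0.
  apply: contra_notN nuw => /eqP t0; move: w_neq0; rewrite ew t0 scale0r addr0.
  have [->|s_neq0] := eqVneq s 0; first by rewrite scale0r eqxx.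
  by move=> _; exact: peq_sym (peq_scale _ s_neq0).
have s_neq0 : s != 0.
  apply: contra_notN nwY => /eqP s0.
  by rewrite ew s0 scale0r add0r; exact: peq_scale.
exists ((s / t) *: u); split; first by apply: peq_scale; rewrite mulf_neq0 ?invr_eq0.
have -> : (s / t) *: u + Y = t^-1 *: w.
  by rewrite ew scalerDr !scalerA mulVf // scale1r mulrC.
by apply: peq_scale; rewrite invr_eq0.
Qed.

Lemma lines_meet_peq (S T : 'M[R]_4) u v : \rank S = 2%N -> \rank T = 2%N ->
  \rank (S + T)%MS = 3%N -> (u <= S)%MS -> (u <= T)%MS -> (v <= S)%MS -> (v <= T)%MS ->
  u != 0 -> v != 0 -> peq u v.
Proof.
move=> rS rT rST uS uT vS vT; apply: (@rank1_peq (S :&: T)%MS).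
- by have := mxrank_sum_cap S T; rewrite rS rT rST; lia.
- by rewrite sub_capmx uS uT.
- by rewrite sub_capmx vS vT.
Qed.

Lemma coplanar_sub_span3 a b c u v w z :
  peq u a -> peq v b -> peq w c -> coplanar u w z v ->
  \rank (span3 a b c) = 3%N -> (z <= span3 a b c)%MS.
Proof.
move=> Ea Eb Ec /coplanarE r4; rewrite !span3E => r3.
have E : (u + v + w :=: a + b + c)%MS := adds3_peq Ea Eb Ec.
have : (z <= u + v + w)%MS.
  apply: submx_trans (_ : z <= u + w + z + v)%MS _; first by sub_adds.
  apply: rank_geq_submx; first by sub_adds.
  by rewrite E r3.
by move/submx_trans; apply; rewrite E.
Qed.

Lemma coplanar_translation_quad u0 u1 v0 v1 :
  coplanar (u0 + v0) (u0 + v1) (u1 + v1) (u1 + v0).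
Proof.
have -> : u1 + v0 = (u0 + v0) - (u0 + v1) + (u1 + v1).
  rewrite opprD [u0 + v0 + _]addrACA subrr add0r [RHS]addrC -addrA.
  by rewrite [v1 + _]addrCA subrr addr0.
apply/coplanarE; apply: leq_trans (mxrankS _) (rank_adds3 (u0 + v0) (u0 + v1) (u1 + v1)).
by sub_adds.
Qed.

Lemma span3_rank3_neq0 a b c A B C : \rank (span3 a b c) = 3%N ->
  peq A a -> peq B b -> peq C c -> B + (C - A) != 0.
Proof.
move=> r3 EA EB EC; apply/negP => /eqP E0.
have EC' : C = A - B by apply/eqP; rewrite -subr_eq0 opprB addrCA E0.
move: r3; rewrite span3E -(adds3_peq EA EB EC) EC' => r3.
suff : (\rank (A + B + (A - B)%R)%MS <= 2)%N by rewrite r3.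
by apply: leq_trans (mxrankS _) (rank_adds2 A B); sub_adds.
Qed.

Lemma coplanar_lincomb x00 x10 x11 x01 :
  coplanar x00 x10 x11 x01 -> ~ collinear x01 x00 x10 ->
  \rank (x00 + x10 + x11 + x01)%MS = 3%N /\
  exists r s t, x11 = r *: x00 + s *: x10 + t *: x01.
Proof.
move=> /coplanarE r4 /noncollinear_rank r3.
have s3 : (x01 + x00 + x10 <= x00 + x10 + x11 + x01)%MS by sub_adds.
have rX : \rank (x00 + x10 + x11 + x01)%MS = 3%N.
  by apply/eqP; rewrite eqn_leq r4 -{1}r3 mxrankS.
split => //.
have : (x11 <= x01 + x00 + x10)%MS.
  apply: submx_trans (_ : x11 <= x00 + x10 + x11 + x01)%MS _; first by sub_adds.
  by apply: rank_geq_submx s3 _; rewrite r3 rX.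
by case/sub_adds3P => r [s [t ->]]; exists s, t, r; rewrite -addrA addrC.
Qed.

Lemma laplace_frame x00 x10 x11 x01 y1 y2 :
  ~ collinear x00 x10 x11 -> ~ collinear x10 x11 x01 ->
  ~ collinear x11 x01 x00 -> ~ collinear x01 x00 x10 ->
  coplanar x00 x10 x11 x01 -> y1 != 0 -> y2 != 0 ->
  collinear x00 x10 y1 -> collinear x01 x11 y1 ->
  collinear x00 x01 y2 -> collinear x10 x11 y2 ->
  exists A0 AN Y2,
    [/\ peq A0 x00, peq AN x10, peq (A0 + Y2) x01 & peq (AN + Y2) x11] /\
    peq Y2 y2 /\ peq (AN - A0) y1.
Proof.
move=> nc1 nc2 nc3 nc4 hcop y1_neq0 y2_neq0 c1 c2 c3 c4.
have [rX [a [b [c ex11]]]] := coplanar_lincomb hcop nc4.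
have r1 := noncollinear_rank_adds nc1; have r2 := noncollinear_rank_adds nc2.
have r3 := noncollinear_rank_adds nc3; have r4 := noncollinear_rank_adds nc4.
have a_neq0 : a != 0.
  apply: contra_notN nc2 => /eqP a0; apply: (collinear_in_line (u := x10) (v := x01));
    rewrite ?ex11 ?a0 ?scale0r ?add0r; sub_adds.
have b_neq0 : b != 0.
  apply: contra_notN nc3 => /eqP b0; apply: (collinear_in_line (u := x01) (v := x00));
    rewrite ?ex11 ?b0 ?scale0r ?addr0; sub_adds.
have c_neq0 : c != 0.
  apply: contra_notN nc1 => /eqP c0; apply: (collinear_in_line (u := x00) (v := x10));
    rewrite ?ex11 ?c0 ?scale0r ?addr0; sub_adds.
set A0 := - a *: x00; set AN := b *: x10; set Y2 := c *: x01 + a *: x00.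
have EA0Y : A0 + Y2 = c *: x01 by rewrite /A0 /Y2 scaleNr addrCA addNr addr0.
have EANY : AN + Y2 = x11 by rewrite ex11 /AN /Y2 addrC -addrA addrC.
have EY2 : Y2 = x11 - AN by rewrite -EANY addrC addKr.
have EY1 : AN - A0 = x11 - c *: x01 by rewrite -EA0Y -EANY opprD addrACA subrr addr0.
exists A0, AN, Y2; split; [split | split].
- by apply: peq_scale; rewrite oppr_eq0.
- exact: peq_scale.
- by rewrite EA0Y; exact: peq_scale.
- by rewrite EANY; exact: peq_refl.
- rewrite addsmxC in r4; apply: (lines_meet_peq r4 r2) => //.
  + by apply: (etrans _ rX); apply: eqmx_rank; apply/andP; split; sub_adds.
  + by rewrite /Y2; sub_adds.
  + by rewrite EY2; sub_adds.
  + exact: collinear_sub_adds r4 c3.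
  + exact: collinear_sub_adds r2 c4.
  + by rewrite /Y2 addsmxC in r4; exact: lincomb2_neq0.
- rewrite addsmxC in r3; apply: (lines_meet_peq r1 r3) => //.
  + by apply: (etrans _ rX); apply: eqmx_rank; apply/andP; split; sub_adds.
  + by rewrite /AN /A0; sub_adds.
  + by rewrite EY1; sub_adds.
  + exact: collinear_sub_adds r1 c1.
  + exact: collinear_sub_adds r3 c2.
  + rewrite /AN /A0 scaleNr opprK; rewrite addsmxC in r1; exact: lincomb2_neq0.
Qed.

Lemma polyline_reps N (u w : 'I_N.+1 -> vec) y Y z0 zN :
  (0 < N)%N -> Y != 0 -> peq Y y ->
  (forall k, u k != 0) -> (forall k, w k != 0) ->
  (forall k, collinear (u k) (w k) y) ->
  (forall k : 'I_N.+1, (0 < k)%N -> (k < N)%N ->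
     [/\ ~ peq (u k) y, ~ peq (w k) y & ~ peq (u k) (w k)]) ->
  peq z0 (u ord0) -> peq (z0 + Y) (w ord0) ->
  peq zN (u ord_max) -> peq (zN + Y) (w ord_max) ->
  exists a : 'I_N.+1 -> vec,
    [/\ a ord0 = z0, a ord_max = zN & forall k, peq (a k) (u k) /\ peq (a k + Y) (w k)].
Proof.
move=> N_gt0 Y_neq0 EY u_neq0 w_neq0 cuw hdist Eu0 Ew0 EuN EwN.
have ord0_max : ord0 != ord_max :> 'I_N.+1 by rewrite -val_eqE /= eq_sym -lt0n.
have reps k : exists z, [/\ peq z (u k), peq (z + Y) (w k),
    (k = ord0 -> z = z0) & (k = ord_max -> z = zN)].
  case: (ord_cases k) => [->|->|/andP[k_gt0 k_ltN]].
  - by exists z0; split => // /eqP; rewrite (negbTE ord0_max).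
  - by exists zN; split => // /eqP; rewrite eq_sym (negbTE ord0_max).
  have [nuy nwy nuw] := hdist k k_gt0 k_ltN.
  have [z [Ez EzY]] : exists z, peq z (u k) /\ peq (z + Y) (w k).
    apply: collinear_rep_add => //.
    - by move=> E; apply: nuy; exact: peq_trans E EY.
    - by move=> E; apply: nwy; exact: peq_trans E EY.
    - exact: collinear_peqr (peq_sym EY) (cuw k).
  by exists z; split => // Ek; move: k_gt0 k_ltN; rewrite Ek /= ?ltnn.
have [a Ha] := fin_all_exists reps.
exists a; split; first by case: (Ha ord0) => _ _ ->.
- by case: (Ha ord_max) => _ _ _ ->.
- by move=> k; case: (Ha k).
Qed.

Lemma multi_Q_net_sub_planes N x00 x10 x01 (p0 p1 q0 q1 : 'I_N.+1 -> vec) g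
    (k l : 'I_N.+1) :
  peq (p0 ord0) x00 -> peq (p0 ord_max) x10 -> peq (p1 ord0) x01 ->
  (0 < k)%N -> (k < N)%N -> (0 < l)%N -> (l < N)%N ->
  planes_meet_in_point x00 (p0 k) (q0 l) x10 (p0 k) (q1 l) x01 (p1 k) (q0 l) ->
  multi_Q_net g -> has_boundary g p0 p1 q0 q1 ->
  (g k l <= span3 x00 (p0 k) (q0 l) :&: span3 x10 (p0 k) (q1 l)
             :&: span3 x01 (p1 k) (q0 l))%MS.
Proof.
move=> Ex00 Ex10 Ex01 k_gt0 k_ltN l_gt0 l_ltN [r1 r2 r3 _] [_ gQ] gb.
have neq_k : (ord0 != k) && (ord_max != k).
  by rewrite -!val_eqE /= neq_ltn k_gt0 neq_ltn k_ltN orbT.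
have neq_l : (ord0 != l) && (ord_max != l).
  by rewrite -!val_eqE /= neq_ltn l_gt0 neq_ltn l_ltN orbT.
case/andP: neq_k => k0 kN; case/andP: neq_l => l0 lN.
have [g00 g0N _ _] := gb ord0; have [gN0 _ _ _] := gb ord_max.
have [gk0 gkN _ _] := gb k; have [_ _ g0l gNl] := gb l.
rewrite !sub_capmx; apply/andP; split; first (apply/andP; split).
- exact: coplanar_sub_span3 (peq_trans g00 Ex00) gk0 g0l (gQ _ _ _ _ k0 l0) r1.
- exact: coplanar_sub_span3 (peq_trans gN0 Ex10) gk0 gNl (gQ _ _ _ _ kN l0) r2.
- exact: coplanar_sub_span3 (peq_trans g0N Ex01) gkN g0l (gQ _ _ _ _ k0 lN) r3.
Qed.

Lemma multi_Q_net_unique N x00 x10 x01 (p0 p1 q0 q1 : 'I_N.+1 -> vec) f g :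
  multi_Q_net f -> has_boundary f p0 p1 q0 q1 ->
  multi_Q_net g -> has_boundary g p0 p1 q0 q1 ->
  peq (p0 ord0) x00 -> peq (p0 ord_max) x10 -> peq (p1 ord0) x01 ->
  (forall k l : 'I_N.+1, (0 < k)%N -> (k < N)%N -> (0 < l)%N -> (l < N)%N ->
     planes_meet_in_point x00 (p0 k) (q0 l) x10 (p0 k) (q1 l) x01 (p1 k) (q0 l)) ->
  forall k l, peq (g k l) (f k l).
Proof.
move=> fQ fb gQ gb Ex00 Ex10 Ex01 hplanes k l.
have via (u v w : vec) : peq u w -> peq v w -> peq u v.
  by move=> Eu Ev; exact: peq_trans Eu (peq_sym Ev).
case: (ord_cases k) => [->|->|/andP[k_gt0 k_ltN]].
- by case: (gb l) => _ _ Eg _; case: (fb l) => _ _ Ef _; exact: via Eg Ef.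
- by case: (gb l) => _ _ _ Eg; case: (fb l) => _ _ _ Ef; exact: via Eg Ef.
case: (ord_cases l) => [->|->|/andP[l_gt0 l_ltN]].
- by case: (gb k) => Eg _ _ _; case: (fb k) => Ef _ _ _; exact: via Eg Ef.
- by case: (gb k) => _ Eg _ _; case: (fb k) => _ Ef _ _; exact: via Eg Ef.
have hpl := hplanes k l k_gt0 k_ltN l_gt0 l_ltN; have [_ _ _ r1] := hpl.
have sub := multi_Q_net_sub_planes Ex00 Ex10 Ex01 k_gt0 k_ltN l_gt0 l_ltN hpl.
exact: rank1_peq r1 (sub _ gQ gb) (sub _ fQ fb) (gQ.1 k l) (fQ.1 k l).
Qed.

Lemma multi_Q_net_exists N x00 x10 x11 x01 y1 y2 (p0 p1 q0 q1 : 'I_N.+1 -> vec) :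
  (0 < N)%N -> y1 != 0 -> y2 != 0 ->
  (forall k, p0 k != 0) -> (forall k, p1 k != 0) ->
  (forall k, q0 k != 0) -> (forall k, q1 k != 0) ->
  coplanar x00 x10 x11 x01 ->
  collinear x00 x10 y1 -> collinear x01 x11 y1 ->
  collinear x00 x01 y2 -> collinear x10 x11 y2 ->
  peq (p0 ord0) x00 -> peq (p0 ord_max) x10 ->
  peq (p1 ord0) x01 -> peq (p1 ord_max) x11 ->
  peq (q0 ord0) x00 -> peq (q0 ord_max) x01 ->
  peq (q1 ord0) x10 -> peq (q1 ord_max) x11 ->
  (forall k, collinear (p0 k) (p1 k) y2) ->
  (forall l, collinear (q0 l) (q1 l) y1) ->
  general_position x00 x10 x11 x01 y1 y2 p0 p1 q0 q1 ->
  exists f, multi_Q_net f /\ has_boundary f p0 p1 q0 q1.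
Proof.
move=> N_gt0 y1_neq0 y2_neq0 p0_neq0 p1_neq0 q0_neq0 q1_neq0 hcop c1 c2 c3 c4
  Ep00 Ep0N Ep10 Ep1N Eq00 Eq0N Eq10 Eq1N hp hq [[nc1 nc2 nc3 nc4] hdist hplanes].
have [A0 [AN [Y2 [[EA0 EAN EA0Y EANY] [EY2 EY1]]]]] :=
  laplace_frame nc1 nc2 nc3 nc4 hcop y1_neq0 y2_neq0 c1 c2 c3 c4.
have [a [a0 aN Ha]] := polyline_reps N_gt0 (peq_neq0 EY2 y2_neq0) EY2
  p0_neq0 p1_neq0 hp (fun k k_gt0 k_ltN => (hdist k k_gt0 k_ltN).1)
  (peq_trans EA0 (peq_sym Ep00)) (peq_trans EA0Y (peq_sym Ep10))
  (peq_trans EAN (peq_sym Ep0N)) (peq_trans EANY (peq_sym Ep1N)).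
have Eq1_0 : peq (A0 + (AN - A0)) (q1 ord0).
  by rewrite addrC subrK; exact: peq_trans EAN (peq_sym Eq10).
have Eq1_N : peq (A0 + Y2 + (AN - A0)) (q1 ord_max).
  by rewrite addrAC [A0 + _]addrC subrK; exact: peq_trans EANY (peq_sym Eq1N).
have [c [c0 cN Hc]] := polyline_reps N_gt0 (peq_neq0 EY1 y1_neq0) EY1
  q0_neq0 q1_neq0 hq (fun l l_gt0 l_ltN => (hdist l l_gt0 l_ltN).2)
  (peq_trans EA0 (peq_sym Eq00)) Eq1_0 (peq_trans EA0Y (peq_sym Eq0N)) Eq1_N.
pose f k l := a k + (c l - A0).
have fb : has_boundary f p0 p1 q0 q1.
  move=> k; rewrite /f c0 cN; split.
  - by rewrite subrr addr0; case: (Ha k).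
  - by rewrite [A0 + Y2]addrC addrK; case: (Ha k).
  - by rewrite a0 addrC subrK; case: (Hc k).
  - by rewrite aN addrCA; case: (Hc k).
exists f; split => //; split; last first.
  by move=> i0 i1 j0 j1 _ _; exact: coplanar_translation_quad.
move=> k l; case: (ord_cases k) => [->|->|/andP[k_gt0 k_ltN]].
- by case: (fb l) => _ _ E _; exact: peq_neq0 E (q0_neq0 l).
- by case: (fb l) => _ _ _ E; exact: peq_neq0 E (q1_neq0 l).
case: (ord_cases l) => [->|->|/andP[l_gt0 l_ltN]].
- by case: (fb k) => E _ _ _; exact: peq_neq0 E (p0_neq0 k).
- by case: (fb k) => _ E _ _; exact: peq_neq0 E (p1_neq0 k).
have [r1 _ _ _] := hplanes k l k_gt0 k_ltN l_gt0 l_ltN.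
exact: span3_rank3_neq0 r1 EA0 (Ha k).1 (Hc l).1.
Qed.

End Projective.

Unset Implicit Arguments.

Theorem proposition8p1 (R : realFieldType) (N : nat)
    (x00 x10 x11 x01 y1 y2 : 'rV[R]_4)
    (p0 p1 q0 q1 : 'I_N.+1 -> 'rV[R]_4) :
  (2 <= N)%N ->
  is_pt x00 -> is_pt x10 -> is_pt x11 -> is_pt x01 ->
  is_pt y1 -> is_pt y2 ->
  (forall k, is_pt (p0 k)) -> (forall k, is_pt (p1 k)) ->
  (forall k, is_pt (q0 k)) -> (forall k, is_pt (q1 k)) ->
  coplanar x00 x10 x11 x01 ->
  collinear x00 x10 y1 -> collinear x01 x11 y1 ->
  collinear x00 x01 y2 -> collinear x10 x11 y2 ->
  peq (p0 ord0) x00 -> peq (p0 ord_max) x10 ->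
  peq (p1 ord0) x01 -> peq (p1 ord_max) x11 ->
  peq (q0 ord0) x00 -> peq (q0 ord_max) x01 ->
  peq (q1 ord0) x10 -> peq (q1 ord_max) x11 ->
  (forall k, collinear (p0 k) (p1 k) y2) ->
  (forall l, collinear (q0 l) (q1 l) y1) ->
  general_position x00 x10 x11 x01 y1 y2 p0 p1 q0 q1 ->
  exists f : 'I_N.+1 -> 'I_N.+1 -> 'rV[R]_4,
    [/\ multi_Q_net f, has_boundary f p0 p1 q0 q1 &
        forall g, multi_Q_net g -> has_boundary g p0 p1 q0 q1 ->
          forall k l, peq (g k l) (f k l)].
Proof.
move=> N_ge2 _ _ _ _ y1_pt y2_pt p0_pt p1_pt q0_pt q1_pt hcop c1 c2 c3 c4
  Ep00 Ep0N Ep10 Ep1N Eq00 Eq0N Eq10 Eq1N hp hq hgp.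
have N_gt0 : (0 < N)%N := ltnW N_ge2.
have [f [fQ fb]] := multi_Q_net_exists N_gt0 y1_pt y2_pt p0_pt p1_pt q0_pt q1_pt
  hcop c1 c2 c3 c4 Ep00 Ep0N Ep10 Ep1N Eq00 Eq0N Eq10 Eq1N hp hq hgp.
exists f; split => // g gQ gb.
by case: hgp => _ _ hplanes; exact: multi_Q_net_unique fQ fb gQ gb Ep00 Ep0N Ep10 hplanes.
Qed.
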